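(* Let $s\in[n]$ with $s\le n-2$. Then \[ \langle1|^{\otimes d}\left(\mathrm{tr}_{n-d}|\psi_s\rangle\langle\psi_s|\right)|1\rangle^{\otimes d}\geq 1-O(ds/n), \] where $\mathrm{tr}_{n-d}$ denotes the partial trace over the last $n-d$ qubits and the $O$-notation refers to $n\to\infty$.
   Context: On $n$ qubits, let $\omega=e^{2\pi i/n}$, $\sigma_m^-=|0\rangle\langle1|$ on qubit $m$, $S_-=\sum_{m=1}^n\sigma_m^-$, $|\Psi\rangle=\overline{\omega}\sum_{m=1}^n\omega^m\sigma_m^-|1\rangle^{\otimes n}$, and for $s=0,\dots,n-2$, $|\psi_s\rangle=S_-^s|\Psi\rangle/\|S_-^s|\Psi\rangle\|$ (the normalized magnon states). *)

From HB Require Import structures.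
From mathcomp Require Import all_boot all_order all_algebra.
From mathcomp Require Import complex.
From mathcomp Require Import reals trigo.
Import Order.TTheory GRing.Theory Num.Theory.
Local Open Scope ring_scope.

Section Magnon.
Variable R : realType.
Local Notation C := (R[i]).

(* Computational basis of n qubits: b i = true means qubit i is |1>,
   false means |0>.  Qubit m (1-based in the paper) is index m-1. *)
Definition basis (n : nat) := {ffun 'I_n -> bool}.
(* A (not necessarily normalized) vector of (C^2)^{\otimes n}, given by its
   coordinates in the computational basis. *)
Definition state (n : nat) := basis n -> C.

Definition omega (n : nat) : C :=
  Complex (cos (2 * pi / n%:R)) (sin (2 * pi / n%:R)).

Definition all_ones_state (n : nat) : state n :=
  fun y => if y == [ffun => true] then 1 else 0.

(* sigma_m^- = |0><1| acting on qubit m: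
   <y| sigma_m^- v> = [y_m = 0] * <y with y_m := 1 | v>. *)
Definition sigma_minus (n : nat) (m : 'I_n) (v : state n) : state n :=
  fun y => if y m then 0 else v [ffun j => if j == m then true else y j].

Definition S_minus (n : nat) (v : state n) : state n :=
  fun y => \sum_(m < n) sigma_minus n m v y.

(* |Psi> = conj(omega) sum_{m=1}^n omega^m sigma_m^- |1>^{\otimes n}
   (paper's qubit m is index m-1 here, hence the exponent m.+1). *)
Definition Psi (n : nat) : state n :=
  fun y => (omega n)^* *
    \sum_(m < n) (omega n) ^+ m.+1 * sigma_minus n m (all_ones_state n) y.

Definition vnorm (n : nat) (v : state n) : C :=
  sqrtC (\sum_(y : basis n) v y * (v y)^*).

Definition magnon_unnorm (n s : nat) : state n := iter s (S_minus n) (Psi n).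
Definition magnon (n s : nat) : state n :=
  fun y => magnon_unnorm n s y / vnorm n (magnon_unnorm n s).

Definition density (n : nat) (v : state n) : basis n -> basis n -> C :=
  fun x y => v x * (v y)^*.

Definition bits_at (k : nat) (a : basis k) (i : nat) : bool :=
  if @insub _ (fun j => j < k)%N ('I_k) i is Some j then a j else false.

Definition join (n d : nat) (a : basis d) (b : basis (n - d)) : basis n :=
  [ffun i : 'I_n => if (i < d)%N then bits_at d a i else bits_at (n - d) b (i - d)].

(* Partial trace over the last n-d qubits (meaningful for d <= n). *)
Definition ptrace_last (n d : nat) (rho : basis n -> basis n -> C)
  : basis d -> basis d -> C :=
  fun a b => \sum_(y : basis (n - d)) rho (join n d a y) (join n d b y).

Definition ones (d : nat) : basis d := [ffun => true].

End Magnon.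

From HB Require Import structures.
From mathcomp Require Import all_boot all_order all_algebra.
From mathcomp Require Import complex.
From mathcomp Require Import reals trigo.
From mathcomp Require Import ring lra zify.
Import Order.TTheory GRing.Theory Num.Theory.
Local Open Scope ring_scope.

(* S_-^s |Psi> is supported on the strings with exactly s+1 zeros, where its
   amplitude is s! times the sum of omega^m over the zero positions m.  Up to a
   unimodular factor this sum is invariant under cyclic shifts of the qubits,
   so every qubit is |0> with the same probability p, and n p = s+1 because
   every string in the support has s+1 zeros.  By the union bound the first d
   qubits are all |1> with probability at least 1 - d(s+1)/n >= 1 - 2ds/n.
   The state is nonzero for s <= n-2 since 1 + omega + ... + omega^s <> 0. *)

Definition zeros {n} (y : basis n) : {set 'I_n} := [set m | ~~ y m].

Definition raise {n} (y : basis n) (m : 'I_n) : basis n :=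
  [ffun j => if j == m then true else y j].

Lemma zeros_raise n (y : basis n) m :
  m \in zeros y -> zeros (raise y m) = zeros y :\ m.
Proof.
by rewrite inE => ym; apply/setP=> j; rewrite !inE ffunE; case: eqVneq => [->|].
Qed.

Lemma raise_eq_ones n (y : basis n) m :
  ~~ y m -> (raise y m == ones n) = (zeros y == [set m]).
Proof.
move=> ym; apply/eqP/eqP => [/ffunP E | /setP E].
  apply/setP=> j; rewrite !inE; have := E j; rewrite !ffunE.
  by case: eqVneq => [->|_ ->].
apply/ffunP=> j; rewrite !ffunE; case: eqVneq => // jm.
by have := E j; rewrite !inE (negbTE jm) => /negbFE.
Qed.

Section CyclicShift.
Variable n' : nat.
Local Notation n := n'.+1.

Definition cshift (j : 'I_n) (x : basis n) : basis n := [ffun i => x (i + j)].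

Lemma cshift_bij j : bijective (cshift j).
Proof.
by exists (cshift (- j)) => x; apply/ffunP=> i; rewrite !ffunE ?addrNK ?addrK.
Qed.

Lemma zeros_cshift j x : zeros (cshift j x) = (fun i => i + j) @^-1: zeros x.
Proof. by apply/setP=> i; rewrite !inE ffunE. Qed.

Variables (V : nmodType) (g : basis n -> V).
Hypothesis g_cshift : forall j x, g (cshift j x) = g x.

Lemma sum_zero_at_cshift j :
  \sum_(x : basis n | ~~ x j) g x = \sum_(x : basis n | ~~ x 0) g x.
Proof.
rewrite (reindex (cshift (- j))); last by apply: onW_bij; apply: cshift_bij.
by apply: eq_big => x; rewrite ?g_cshift // ffunE addrN.
Qed.

Lemma sum_zero_at0_mulrn :
  (\sum_(x : basis n | ~~ x 0) g x) *+ n = \sum_(x : basis n) g x *+ #|zeros x|.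
Proof.
rewrite -[X in _ *+ X](card_ord n) -sumr_const.
transitivity (\sum_(j in 'I_n) \sum_(x : basis n) if ~~ x j then g x else 0).
  by apply: eq_bigr => j _; rewrite -big_mkcond sum_zero_at_cshift.
rewrite exchange_big; apply: eq_bigr => x _.
rewrite -big_mkcondr sumr_const; congr (_ *+ _); apply: eq_card => j.
by rewrite !inE.
Qed.
End CyclicShift.

Arguments cshift {n'} j x.
Arguments sum_zero_at_cshift {n' V g} g_cshift j.
Arguments sum_zero_at0_mulrn {n' V g} g_cshift.

Lemma sum_le_union_bound {T I : finType} {V : numDomainType} (g : T -> V)
    (G : I -> pred T) :
  (forall x, 0 <= g x) ->
  \sum_x g x <= \sum_(x | [forall i, G i x]) g x + \sum_i \sum_(x | ~~ G i x) g x.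
Proof.
move=> g_ge0; rewrite (bigID [pred x | [forall i, G i x]]) /= lerD2l.
under [X in _ <= X]eq_bigr do rewrite big_mkcond.
rewrite exchange_big /= big_mkcond; apply: ler_sum => x _.
have [/forallPn[i notGix] | _] := boolP (~~ [forall i, G i x]); last first.
  by apply: sumr_ge0 => i _; case: ifP.
by rewrite (bigD1 i) //= notGix lerDl; apply: sumr_ge0 => k _; case: ifP.
Qed.

Lemma sum_ord_lt {V : nmodType} {n k} (F : nat -> V) : (k <= n)%N ->
  \sum_(i in [set i : 'I_n | (i < k)%N]) F i = \sum_(i < k) F i.
Proof.
move=> le_kn; rewrite [RHS](big_ord_widen_cond n xpredT) //.
by apply: eq_bigl => i; rewrite inE.
Qed.

Lemma card_ord_lt n k : (k <= n)%N -> #|[set i : 'I_n | (i < k)%N]| = k.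
Proof.
by move=> le_kn; rewrite -sum1_card (sum_ord_lt (fun=> 1%N)) // sum1_card card_ord.
Qed.

Lemma bits_atE {k} (a : basis k) {i} (lt_ik : (i < k)%N) :
  bits_at k a i = a (Ordinal lt_ik).
Proof. by rewrite /bits_at insubT. Qed.

Section Join.
Variables (n d : nat).
Hypothesis le_dn : (d <= n)%N.

Lemma add_ord_sub_lt (k : 'I_(n - d)) : (d + k < n)%N.
Proof. by rewrite -ltn_subRL. Qed.

Definition shift_ord (k : 'I_(n - d)) : 'I_n := Ordinal (add_ord_sub_lt k).

Lemma join_low a y (j : 'I_d) : join n d a y (widen_ord le_dn j) = a j.
Proof.
rewrite /join ffunE /= ltn_ord (bits_atE a (ltn_ord j)).
by congr (a _); apply: val_inj.
Qed.

Lemma join_high a y (k : 'I_(n - d)) : join n d a y (shift_ord k) = y k.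
Proof.
have lt_kn : (d + k - d < n - d)%N by rewrite addKn.
rewrite /join ffunE /= ltnNge leq_addr /= (bits_atE y lt_kn).
by congr (y _); apply: val_inj; rewrite /= addKn.
Qed.

Lemma join_bij : bijective (fun p : basis d * basis (n - d) => join n d p.1 p.2).
Proof.
apply: inj_card_bij => [[a y] [b z] /= E|].
  congr pair; apply/ffunP => i.
    by rewrite -(join_low a y) E join_low.
  by rewrite -(join_high a y) E join_high.
by rewrite card_prod !card_ffun !card_bool !card_ord -expnD subnKC.
Qed.

Lemma forall_join_low a y :
  [forall j : 'I_d, join n d a y (widen_ord le_dn j)] = (a == ones d).
Proof.
apply/forallP/eqP => [all1 | ->] /=; last by move=> j; rewrite join_low ffunE.
by apply/ffunP => j; rewrite ffunE -(join_low a y) all1.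
Qed.

Lemma sum_join_ones {V : nmodType} (F : basis n -> V) :
  \sum_(x : basis n | [forall j : 'I_d, x (widen_ord le_dn j)]) F x =
  \sum_(y : basis (n - d)) F (join n d (ones d) y).
Proof.
rewrite (reindex _ (onW_bij _ join_bij)) /=.
transitivity (\sum_a \sum_(y | a == ones d) F (join n d a y)).
  by rewrite pair_big_dep; apply: eq_bigl => -[a y]; rewrite /= forall_join_low.
rewrite (bigD1 (ones d)) //= eqxx [X in _ + X]big1 ?addr0 // => a aN.
by apply: big1 => y; rewrite (negbTE aN).
Qed.
End Join.

Arguments sum_join_ones {n d} le_dn {V} F.

Section Omega.
Variables (R : realType) (n : nat).
Local Notation w := (omega R n).
Local Notation theta := (2 * pi / n%:R : R).

Lemma omega_expE k : w ^+ k = Complex (cos (k%:R * theta)) (sin (k%:R * theta)).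
Proof.
elim: k => [|k IH]; first by rewrite expr0 !mul0r cos0 sin0.
rewrite exprS IH /omega; set t := theta.
rewrite -[k.+1]addn1 natrD mulrDl mul1r cosD sinD.
by congr Complex; ring.
Qed.

Lemma omega_expn : (0 < n)%N -> w ^+ n = 1.
Proof.
move=> n_gt0; rewrite omega_expE mulrC divfK ?pnatr_eq0 -?lt0n //.
by rewrite mulr_natl cos2pi sin2pi.
Qed.

Lemma norm_omega : `|w| = 1.
Proof. by rewrite normc_def /= cos2Dsin2 sqrtr1. Qed.

Lemma omega_conjM : w^* * w = 1.
Proof. by rewrite mulrC -normCK norm_omega expr1n. Qed.

(* cos x = 1 - 2 sin (x/2)^2 < 1 for 0 < x < 2 pi. *)
Lemma omega_exp_neq1 k : (0 < k < n)%N -> w ^+ k != 1.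
Proof.
case/andP=> k_gt0 lt_kn; rewrite omega_expE; apply/negP => /eqP [] cos1 _.
set x := k%:R * theta in cos1.
have n_gt0 : (0 : R) < n%:R by rewrite ltr0n (ltn_trans k_gt0).
have half_x : x / 2 = pi * (k%:R / n%:R) by rewrite /x; field; rewrite gt_eqF.
have sin_gt0 : 0 < sin (x / 2).
  apply: sin_gt0_pi; rewrite half_x; apply/andP; split.
    by rewrite mulr_gt0 ?pi_gt0 // divr_gt0 // ltr0n.
  by rewrite gtr_pMr ?pi_gt0 // ltr_pdivrMr // mul1r ltr_nat.
have x2 : x = (x / 2) *+ 2 by rewrite -mulr_natr mulfVK // pnatr_eq0.
rewrite x2 cos_mulr2n in cos1.
have := sin2cos2 (x / 2); nra.
Qed.

Lemma sum_omega_exp_neq0 k : (0 < k < n)%N -> \sum_(i < k) w ^+ i != 0.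
Proof.
move=> /omega_exp_neq1; apply: contra => /eqP sum0.
by rewrite -subr_eq0 subrX1 sum0 mulr0.
Qed.
End Omega.

Section Amplitude.
Variables (R : realType) (n : nat).
Local Notation C := R[i].

Lemma S_minusE (v : state R n) y :
  S_minus R n v y = \sum_(m in zeros y) v (raise y m).
Proof.
rewrite /S_minus /sigma_minus [RHS]big_mkcond; apply: eq_bigr => m _.
by rewrite inE; case: (y m).
Qed.

Lemma sigma_minus_all_ones m y :
  sigma_minus R n m (all_ones_state R n) y = (zeros y == [set m])%:R.
Proof.
rewrite /sigma_minus /all_ones_state -/(raise y m) -/(ones n).
case: (boolP (y m)) => [ym | /raise_eq_ones ->]; last by case: eqP.
by case: eqP => // /setP/(_ m); rewrite !inE ym eqxx.
Qed.

Lemma iter_S_minus_single_flip (w : 'I_n -> C) (v : state R n) :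
  (forall y, v y = \sum_m w m * sigma_minus R n m (all_ones_state R n) y) ->
  forall k y, iter k (S_minus R n) v y =
    if #|zeros y| == k.+1 then k`!%:R * \sum_(m in zeros y) w m else 0.
Proof.
move=> vE; elim=> [|k IH] y.
  rewrite [LHS]vE fact0 mul1r.
  under eq_bigr do rewrite sigma_minus_all_ones.
  case: (boolP (#|zeros y| == 1%N)) => [/cards1P[m0 ->] | card_ne1].
    rewrite big_set1 (bigD1 m0) //= eqxx mulr1 big1 ?addr0 // => m m_ne.
    by rewrite eqEcard sub1set inE eq_sym (negbTE m_ne) mulr0.
  rewrite big1 // => m _; case: eqP => [zeros1 | _]; last by rewrite mulr0.
  by rewrite zeros1 cards1 in card_ne1.
rewrite iterS S_minusE.
have card_zerosD1 m : m \in zeros y -> #|zeros y :\ m| = #|zeros y|.-1.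
  by move=> my; rewrite [in RHS](cardsD1 m) my.
case: eqP => [card_k2 | card_ne].
  transitivity (\sum_(m in zeros y) k`!%:R * (\sum_(i in zeros y) w i - w m)).
    apply: eq_bigr => m my; rewrite IH zeros_raise // card_zerosD1 // card_k2 eqxx.
    by rewrite (big_setD1 m my) /= addrC addrK.
  by rewrite -mulr_sumr sumrB sumr_const card_k2 -mulr_natr factS natrM; ring.
rewrite big1 // => m my; rewrite IH zeros_raise // card_zerosD1 //.
case: eqP => // card_k1; case: card_ne.
by rewrite (cardsD1 m) my -card_k1 card_zerosD1.
Qed.

Lemma Psi_single_flip y :
  Psi R n y =
  \sum_(m < n) omega R n ^+ m * sigma_minus R n m (all_ones_state R n) y.
Proof.
rewrite /Psi mulr_sumr; apply: eq_bigr => m _.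
by rewrite mulrA exprS mulrA omega_conjM mul1r.
Qed.

Lemma magnon_unnormE s y : magnon_unnorm R n s y =
  if #|zeros y| == s.+1 then s`!%:R * \sum_(m in zeros y) omega R n ^+ m else 0.
Proof. exact: iter_S_minus_single_flip Psi_single_flip s y. Qed.
End Amplitude.

Section Magnon.
Variables (R : realType) (n' s : nat).
Local Notation n := n'.+1.
Local Notation w := (omega R n).
Local Notation u := (magnon_unnorm R n s).

Lemma omega_exp_add (i j : 'I_n) : w ^+ (i + j)%R = w ^+ i * w ^+ j.
Proof. by rewrite /= expr_mod ?omega_expn // exprD. Qed.

Lemma norm_sum_omega_preim (A : {set 'I_n}) j :
  `|\sum_(m in (fun i => i + j) @^-1: A) w ^+ m| = `|\sum_(m in A) w ^+ m|.
Proof.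
symmetry; rewrite (reindex_inj (addIr j)).
rewrite (eq_bigr (fun i : 'I_n => w ^+ i * w ^+ j)).
  rewrite -mulr_suml normrM normrX norm_omega expr1n mulr1.
  by congr `|_|; apply: eq_bigl => i; rewrite inE.
by move=> i _; rewrite omega_exp_add.
Qed.

Lemma norm_magnon_unnorm_cshift j x : `|u (cshift j x)| = `|u x|.
Proof.
rewrite !magnon_unnormE zeros_cshift card_preimset; last exact: addIr.
by case: eqP => // _; rewrite !normrM norm_sum_omega_preim.
Qed.

Lemma magnon_unnorm_eq0 x : #|zeros x| != s.+1 -> u x = 0.
Proof. by rewrite magnon_unnormE => /negbTE ->. Qed.

Lemma magnon_unnorm_neq0 : (s.+1 < n)%N -> u [ffun i : 'I_n => (s < i)%N] != 0.
Proof.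
move=> lt_sn; have le_sn := ltnW lt_sn.
have zeros0 : zeros [ffun i : 'I_n => (s < i)%N] = [set i : 'I_n | (i < s.+1)%N].
  by apply/setP => i; rewrite !inE ffunE -leqNgt.
rewrite magnon_unnormE zeros0 card_ord_lt // eqxx.
rewrite (sum_ord_lt (fun i => w ^+ i)) //.
by rewrite mulf_neq0 ?pnatr_eq0 -?lt0n ?fact_gt0 ?sum_omega_exp_neq0.
Qed.

Lemma sum_norm_magnon_unnorm_gt0 :
  (s.+1 < n)%N -> 0 < \sum_(x : basis n) `|u x| ^+ 2.
Proof.
move=> lt_sn; pose x0 : basis n := [ffun i : 'I_n => (s < i)%N].
have u0_gt0 : 0 < `|u x0| ^+ 2.
  by rewrite exprn_gt0 // normr_gt0; apply: magnon_unnorm_neq0.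
apply: (lt_le_trans u0_gt0); rewrite (bigD1 x0) // lerDl.
by apply: sumr_ge0 => x _; rewrite exprn_ge0.
Qed.

Lemma sum_norm_magnon_unnorm_zero_at j :
  \sum_(x : basis n | ~~ x j) `|u x| ^+ 2 =
  (\sum_(x : basis n) `|u x| ^+ 2) * s.+1%:R / n%:R.
Proof.
have u_cshift k x : `|u (cshift k x)| ^+ 2 = `|u x| ^+ 2.
  by rewrite norm_magnon_unnorm_cshift.
have weighted : \sum_(x : basis n) `|u x| ^+ 2 *+ #|zeros x| =
    (\sum_(x : basis n) `|u x| ^+ 2) *+ s.+1.
  rewrite -sumrMnl; apply: eq_bigr => x _.
  have [-> // | /magnon_unnorm_eq0 ->] := eqVneq #|zeros x| s.+1.
  by rewrite normr0 expr0n !mul0rn.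
have := sum_zero_at0_mulrn u_cshift.
rewrite -(sum_zero_at_cshift u_cshift j) weighted => E.
by rewrite -[LHS](@mulfK _ n%:R) ?pnatr_eq0 // mulr_natr E mulr_natr.
Qed.

Lemma ptrace_magnon d a :
  ptrace_last R n d (density R n (magnon R n s)) a a =
  (\sum_(y : basis (n - d)) `|u (join n d a y)| ^+ 2) /
  \sum_(x : basis n) `|u x| ^+ 2.
Proof.
have vnormE : vnorm R n u = sqrtC (\sum_(x : basis n) `|u x| ^+ 2).
  by rewrite /vnorm; congr sqrtC; apply: eq_bigr => x _; rewrite normCK.
rewrite /ptrace_last /density mulr_suml; apply: eq_bigr => y _.
rewrite /magnon vnormE -normCK normf_div expr_div_n -(normrX _ (sqrtC _)) sqrtCK.
rewrite [`|\sum_x _|]ger0_norm //.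
by apply: sumr_ge0 => x _; rewrite exprn_ge0.
Qed.

Lemma magnon_ptrace_ge d (le_dn : (d <= n)%N) : (s.+1 < n)%N ->
  1 - (d * s.+1)%:R / n%:R <=
  ptrace_last R n d (density R n (magnon R n s)) (ones d) (ones d).
Proof.
move=> lt_sn; rewrite ptrace_magnon ler_pdivlMr ?sum_norm_magnon_unnorm_gt0 //.
set D := \sum_(x : basis n) `|u x| ^+ 2.
rewrite -(sum_join_ones le_dn (fun x => `|u x| ^+ 2)).
have := sum_le_union_bound (fun x => `|u x| ^+ 2)
  (fun (j : 'I_d) (x : basis n) => x (widen_ord le_dn j))
  (fun x => exprn_ge0 _ (normr_ge0 _)).
rewrite -/D [X in _ + X](eq_bigr (fun=> D * s.+1%:R / n%:R)) => [|j _]; last first.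
  exact: sum_norm_magnon_unnorm_zero_at.
rewrite sumr_const card_ord -lerBlDr; apply: le_trans.
by rewrite -mulr_natr natrM le_eqVlt; apply/orP; left; apply/eqP; ring.
Qed.
End Magnon.

Theorem lemma21 (R : realType) :
  exists K : R, exists N : nat,
    forall n s d : nat, (N <= n)%N -> (1 <= s)%N -> (s <= n - 2)%N -> (d <= n)%N ->
      ((1 - K * d%:R * s%:R / n%:R)%:C)%C
        <= ptrace_last R n d (density R n (magnon R n s)) (ones d) (ones d).
Proof.
(* The hypotheses on s force n >= 3, and s.+1 <= 2 s. *)
exists 2, 0%N => n s d _ s_ge1 le_s_n2 le_dn.
have lt_sn : (s.+1 < n)%N by lia.
case: n le_s_n2 le_dn lt_sn => [// | n'] _ le_dn lt_sn.
apply: le_trans (@magnon_ptrace_ge R n' s d le_dn lt_sn).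
rewrite rmorphB rmorph1 !rmorphM fmorphV !rmorph_nat lerD2l lerN2.
by rewrite ler_pM2r ?invr_gt0 ?ltr0n // -!natrM ler_nat; nia.
Qed.
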